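(* Let $X^+\subseteq\mathcal A^{\mathbb N}$ be a one-sided subshift, where $\mathcal A=\{0,1,\dots,d-1\}$. For any choice of points $a^{(n)}=a^{(n)}_0a^{(n)}_1\dots\in X^+$ ($n\ge0$), let $b^{(n)}\in\mathcal A^{\mathbb Z}$ be the bisequence $0^\infty.a^{(n)}$ (i.e. $b^{(n)}_i=a^{(n)}_i$ for $i\ge0$ and $b^{(n)}_i=0$ for $i<0$), and set $x_n(a^{(n)})=\sigma^n b^{(n)}$. Then $\tilde X$ is exactly the set of all limit points of sequences $(x_n(a^{(n)}))_{n\ge0}$ (limits of convergent subsequences), taken over all choices of $a^{(n)}\in X^+$, $n\ge0$.
   Context: $\sigma$ is the shift $(\sigma x)_i=x_{i+1}$ on $\mathcal A^{\mathbb N}$ and $\mathcal A^{\mathbb Z}$, with the product topology. A one-sided subshift is a nonempty closed $\sigma$-invariant subset of $\mathcal A^{\mathbb N}$. Its natural extension is $\tilde X=\{x\in\mathcal A^{\mathbb Z}: x_px_{p+1}\dots\in X^+ \text{ for all } p\in\mathbb Z\}$. *)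

From HB Require Import structures.
From mathcomp Require Import all_boot all_order all_algebra.
From mathcomp Require Import all_classical all_reals all_analysis.
Set Implicit Arguments. Unset Strict Implicit. Unset Printing Implicit Defensive.
Import Order.TTheory GRing.Theory Num.Theory.
Local Open Scope classical_set_scope.

Definition alph (d : nat) : Type := discrete_topology 'I_d.

Definition onesided (d : nat) := {ptws nat -> alph d}.
Definition twosided (d : nat) := {ptws int -> alph d}.

Definition shiftN (d : nat) (x : onesided d) : onesided d := fun i => x i.+1.

Definition subshift (d : nat) (X : set (onesided d)) : Prop :=
  X !=set0 /\ closed X /\ (forall x, X x -> X (shiftN x)).

Definition natext (d : nat) (X : set (onesided d)) : set (twosided d) :=
  [set x | forall p : int, X (fun i : nat => x (p + (i%:Z))%R)].

Definition zeroL (d : nat) (hd : (0 < d)%N) : alph d := Ordinal hd.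

Definition bseq (d : nat) (hd : (0 < d)%N) (a : onesided d) : twosided d :=
  fun i : int => match i with Posz k => a k | Negz _ => zeroL hd end.

Definition shiftZn (d : nat) (n : nat) (y : twosided d) : twosided d :=
  fun i : int => y (i + (n%:Z))%R.

Definition xn (d : nat) (hd : (0 < d)%N) (n : nat) (a : onesided d) : twosided d :=
  shiftZn n (bseq hd a).

Definition subseq_limit (d : nat) (u : nat -> twosided d) (y : twosided d) : Prop :=
  exists phi : nat -> nat, {homo phi : m n / (m < n)%N} /\
    ((fun k => u (phi k)) @ \oo --> y).

From mathcomp Require Import all_boot all_order all_algebra.
From mathcomp Require Import all_classical all_reals all_analysis.
From mathcomp Require Import zify.
Local Open Scope classical_set_scope.
Import Order.TTheory GRing.Theory Num.Theory.

(* A point y of the natural extension is the limit of the whole sequence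
   x_n(a^(n)) with a^(n) := y_{-n} y_{-n+1} ..., since x_n(a^(n)) agrees with y
   on [-n, oo). Conversely, if x_(phi k)(a^(phi k)) -> y, then for each p the
   points sigma^(p + phi k) a^(phi k) of X converge to y_p y_(p+1) ..., which
   therefore lies in the closed set X. *)

Lemma ptws_discrete_cvgP (d : nat) (T : choiceType)
    (u : nat -> {ptws T -> alph d}) (y : {ptws T -> alph d}) :
  u @ \oo --> y <-> forall t, \forall n \near \oo, u n t = y t.
Proof.
rewrite (@pointwise_cvgP (discrete_topology T) (alph d) (u @ \oo) y _).
split=> cvu t; first by move/(discrete_cvg _ _): (cvu t).
by apply/discrete_cvg; apply: cvu.
Qed.

Lemma iter_shiftNE (d m : nat) (x : onesided d) (i : nat) :
  iter m (@shiftN d) x i = x (m + i)%N.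
Proof. by elim: m i => [|m IH] i //=; rewrite /shiftN IH addSnnS. Qed.

Lemma iter_shiftN_closed (d : nat) (X : set (onesided d)) (m : nat) (x : onesided d) :
  (forall x, X x -> X (shiftN x)) -> X x -> X (iter m (@shiftN d) x).
Proof. by move=> shX Xx; elim: m => //= m IH; apply: shX. Qed.

Lemma xnE (d : nat) (hd : (0 < d)%N) (n : nat) (a : onesided d) (t : int) :
  (0 <= t + n%:Z)%R -> xn hd n a t = a (absz (t + n%:Z)%R).
Proof. by rewrite /xn /shiftZn /bseq; case: (t + n%:Z)%R. Qed.

Lemma natext_sub_limits (d : nat) (hd : (0 < d)%N) (X : set (onesided d)) :
  natext X `<=`
  [set y | exists a : nat -> onesided d,
     (forall n, X (a n)) /\ subseq_limit (fun n => xn hd n (a n)) y].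
Proof.
move=> y Xy; exists (fun n (i : nat) => y (i%:Z - n%:Z)%R); split.
  move=> n; have := Xy (- n%:Z)%R.
  by congr X; apply: funext => i; rewrite addrC.
exists id; split=> //; apply/ptws_discrete_cvgP => t.
exists (absz t) => // n /= tn; rewrite xnE; last by lia.
by congr y; lia.
Qed.

Lemma limits_sub_natext (d : nat) (hd : (0 < d)%N) (X : set (onesided d))
    (a : nat -> onesided d) (y : twosided d) :
  closed X -> (forall x, X x -> X (shiftN x)) -> (forall n, X (a n)) ->
  subseq_limit (fun n => xn hd n (a n)) y -> natext X y.
Proof.
move=> clX shX Xa [phi [phi_incr cvy]] p.
have phi_ge k : (k <= phi k)%N.
  by elim: k => // k IH; apply: leq_ltn_trans IH (phi_incr _ _ _).
pose w k := iter (absz (p + (phi k)%:Z)%R) (@shiftN d) (a (phi k)).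
apply: (@closed_cvg _ _ \oo _ w X clX).
  by apply: nearW => k; apply: iter_shiftN_closed.
apply/ptws_discrete_cvgP => i.
have /ptws_discrete_cvgP /(_ (p + i%:Z)%R) cvyi := cvy.
near=> k.
have pk : (absz p <= k)%N by near: k; exists (absz p).
have := phi_ge k => kphi.
by rewrite /w iter_shiftNE -(near cvyi k) //= xnE; [congr a|]; lia.
Unshelve. all: by end_near.
Qed.

Theorem proposition5p5 (d : nat) (hd : (0 < d)%N) (X : set (onesided d)) :
  subshift X ->
  natext X =
  [set y : twosided d | exists a : nat -> onesided d,
     (forall n, X (a n)) /\ subseq_limit (fun n => xn hd n (a n)) y].
Proof.
move=> [_ [clX shX]]; apply/seteqP; split; first exact: natext_sub_limits.
by move=> y [a [Xa lim_y]]; apply: limits_sub_natext lim_y.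
Qed.
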